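(* Let $\Xi\in\mathcal C$ and write $\Xi=X^\dagger X$ with $X\in\mathcal B(\mathcal H)$. Then $\Xi$ is an extremal point of $\mathcal C$ if and only if $$\mathcal B(\operatorname{Rng}(X))=\operatorname{Span}\Big\{X\Big[\textstyle\bigoplus_{k\in S}(I_{\mathcal H_k}\otimes M_k)\Big]X^\dagger:\ M_k\in\mathcal B(\mathbb C^{m_k})\ \forall k\Big\},$$ where $\mathcal B(\operatorname{Rng}(X))$ is identified with the operators on $\mathcal H$ whose support and range lie in $\operatorname{Rng}(X)$.
   Context: Let $G$ be a group with a unitary representation $g\mapsto U_g$ on a finite-dimensional Hilbert space $\mathcal H$, decomposed as $\mathcal H=\bigoplus_{k\in S}(\mathcal H_k\otimes\mathbb C^{m_k})$, where $S$ is the set of equivalence classes of irreducible components, $\mathcal H_k$ carries the irreducible representation of class $k$ and $m_k$ is its multiplicity, so that $U_g=\bigoplus_k U^{(k)}_g\otimes I_{m_k}$. Let $d_{\mathcal H_k}=\dim\mathcal H_k$, let $P_k$ be the orthogonal projector onto $\mathcal H_k\otimes\mathbb C^{m_k}$, and let $\operatorname{Tr}_{\mathcal H_k}$ be the partial trace $\mathcal B(\mathcal H_k\otimes\mathbb C^{m_k})\to\mathcal B(\mathbb C^{m_k})$. Let $\mathcal C$ be the convex set of operators $\Xi\ge0$ on $\mathcal H$ with $\operatorname{Tr}_{\mathcal H_k}(P_k\Xi P_k)=d_{\mathcal H_k}I_{m_k}$ for all $k\in S$ (the seeds of covariant POVMs $dP_g=U_g^\dagger\Xi U_g\,dg$).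 *)

From mathcomp Require Import all_boot all_algebra.
From mathcomp Require Import reals.
From mathcomp.real_closed Require Import complex.
Set Implicit Arguments. Unset Strict Implicit. Unset Printing Implicit Defensive.
Import GRing.Theory Num.Theory.
Local Open Scope ring_scope.

(* Index set of an orthonormal basis of H = (+)_{k in S} (H_k (x) C^{m_k}):
   basis vectors e_{k,alpha,a}, alpha < d_k = dim H_k, a < m_k. *)
Definition idxT (S : finType) (d m : S -> nat) : finType :=
  {k : S & ('I_(d k) * 'I_(m k))%type}.

Definition adjmx (C : numClosedFieldType) (p q : nat) (A : 'M[C]_(p, q)) : 'M[C]_(q, p) :=
  \matrix_(i, j) (A j i)^*.

Definition psdmx (C : numClosedFieldType) (n : nat) (A : 'M[C]_n) : Prop :=
  forall v : 'cV[C]_n, 0 <= (adjmx v *m A *m v) 0 0.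

(* Tr_{H_k}(P_k A P_k), an operator on C^{m_k} *)
Definition ptrace (S : finType) (d m : S -> nat) (C : numClosedFieldType) (k : S)
    (A : 'M[C]_#|idxT d m|) : 'M[C]_(m k) :=
  \matrix_(a, b) \sum_(al < d k)
     A (enum_rank (Tagged (fun k => ('I_(d k) * 'I_(m k))%type) (al, a) : idxT d m))
       (enum_rank (Tagged (fun k => ('I_(d k) * 'I_(m k))%type) (al, b) : idxT d m)).

(* the convex set C of seeds of covariant POVMs *)
Definition seedC (R : realType) (S : finType) (d m : S -> nat)
    (Xi : 'M[R[i]]_#|idxT d m|) : Prop :=
  psdmx Xi /\ forall k : S, ptrace k Xi = ((d k)%:R)%:M.

(* the operator (+)_{k in S} (I_{H_k} (x) M_k) *)
Definition blockop (S : finType) (d m : S -> nat) (C : numClosedFieldType)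
    (M : forall k : S, 'M[C]_(m k)) : 'M[C]_#|idxT d m| :=
  \matrix_(i, j)
    (let x : idxT d m := enum_val i in
     let y : idxT d m := enum_val j in
     if tag x == tag y then
       ((tagged x).1 == (tagged_as x y).1)%:R * M (tag x) (tagged x).2 (tagged_as x y).2
     else 0).

Definition extreme_point (R : realType) (n : nat) (P : 'M[R[i]]_n -> Prop)
    (x : 'M[R[i]]_n) : Prop :=
  P x /\ forall (y z : 'M[R[i]]_n) (t : R), P y -> P z -> 0 < t < 1 ->
    x = (t%:C)%C *: y + ((1 - t)%:C)%C *: z -> y = z.

(* column space (range) of A is contained in the column space Rng(V) *)
Definition rng_sub (C : fieldType) (n p q : nat) (A : 'M[C]_(n, p)) (V : 'M[C]_(n, q)) : bool :=
  (A^T <= V^T)%MS.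

(* B(Rng X): operators on H whose range and support (= Rng(A^dagger)) lie in Rng X *)
Definition BRng (C : numClosedFieldType) (n : nat) (X A : 'M[C]_n) : Prop :=
  rng_sub A X /\ rng_sub (adjmx A) X.

Definition in_span (C : numClosedFieldType) (n : nat) (P : 'M[C]_n -> Prop) (A : 'M[C]_n) : Prop :=
  exists (l : nat) (c : 'I_l -> C) (B : 'I_l -> 'M[C]_n),
    (forall j, P (B j)) /\ A = \sum_(j < l) c j *: B j.

(* Write G = X^dagger X (= Xi).  Two facts drive the proof: (i) all partial traces
   Tr_{H_k}(P_k D P_k) vanish iff tr(D B) = 0 for every block operator
   B = (+)_k (I (x) M_k); (ii) if H is hermitian and D = X^dagger H X satisfies (i),
   then Xi +- e D lies in C for small e > 0.
   If B(Rng X) consists of the X B X^dagger and Xi = t y + (1 - t) z in C, then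
   D = y - z vanishes on ker X from both sides, so D = X^dagger K X; writing
   X D X^dagger = X B X^dagger gives tr(D^dagger D) = conj tr(D^dagger B) = 0 by (i).
   Conversely, if some X K X^dagger is not of that form, G K G lies outside the
   subspace of the G B G; a linear functional separating them gives K' with
   G K' G <> 0 satisfying (i), and by (ii) one of its hermitian parts moves Xi both
   ways inside C. *)

From HB Require Import structures.
From mathcomp Require Import all_boot all_order all_algebra.
From mathcomp Require Import reals.
From mathcomp.real_closed Require Import complex.
From mathcomp Require Import ring lra.
From Stdlib Require Import FunctionalExtensionality Classical.
Import Order.TTheory GRing.Theory Num.Theory Num.Def.
Local Open Scope ring_scope.
Set Implicit Arguments. Unset Strict Implicit.

Section Adjoint.
Variable C : numClosedFieldType.
Implicit Types p q r : nat.

Lemma adjmx_map_tr p q (A : 'M[C]_(p, q)) : adjmx A = map_mx conjC A^T.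
Proof. by apply/matrixP=> i j; rewrite !mxE. Qed.

Lemma adjmxK p q (A : 'M[C]_(p, q)) : adjmx (adjmx A) = A.
Proof. by apply/matrixP=> i j; rewrite !mxE conjCK. Qed.

Lemma adjmxM p q r (A : 'M[C]_(p, q)) (B : 'M[C]_(q, r)) :
  adjmx (A *m B) = adjmx B *m adjmx A.
Proof. by rewrite !adjmx_map_tr trmx_mul map_mxM. Qed.

Lemma adjmxD p q (A B : 'M[C]_(p, q)) : adjmx (A + B) = adjmx A + adjmx B.
Proof. by rewrite !adjmx_map_tr linearD map_mxD. Qed.

Lemma adjmxZ p q a (A : 'M[C]_(p, q)) : adjmx (a *: A) = a^* *: adjmx A.
Proof. by rewrite !adjmx_map_tr linearZ map_mxZ. Qed.

Lemma adjmx0 p q : adjmx (0 : 'M[C]_(p, q)) = 0.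
Proof. by apply/matrixP=> i j; rewrite !mxE rmorph0. Qed.

Lemma adjmx_delta p q (i : 'I_p) (j : 'I_q) : adjmx (delta_mx i j : 'M[C]_(p, q)) = delta_mx j i.
Proof. by apply/matrixP=> a b; rewrite !mxE rmorph_nat andbC. Qed.

Lemma mxtrace_adjmx n (A : 'M[C]_n) : \tr (adjmx A) = (\tr A)^*.
Proof. by rewrite /mxtrace rmorph_sum; apply: eq_bigr => i _; rewrite mxE. Qed.

Lemma submx_adjmx_tr p q r (A : 'M[C]_(p, q)) (B : 'M[C]_(r, q)) :
  ((adjmx A)^T <= (adjmx B)^T)%MS = (A <= B)%MS.
Proof. by rewrite !adjmx_map_tr -!map_trmx !trmxK map_submx. Qed.

Lemma mxtrace_gram_eq0 p q (A : 'M[C]_(p, q)) : \tr (adjmx A *m A) = 0 -> A = 0.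
Proof.
have tr_gram : \tr (adjmx A *m A) = \sum_i \sum_j `|A j i| ^+ 2.
  by apply: eq_bigr => i _; rewrite mxE; apply: eq_bigr => j _; rewrite mxE mulrC -normCK.
rewrite tr_gram => /eqP; rewrite psumr_eq0 => [/allP A0|i _]; last first.
  by rewrite sumr_ge0 // => j _; rewrite exprn_ge0.
apply/matrixP=> j i; rewrite mxE; move/(_ i (mem_index_enum _)): A0.
rewrite /= psumr_eq0 => [/allP/(_ j (mem_index_enum _))|k _]; last by rewrite exprn_ge0.
by rewrite /= sqrf_eq0 normr_eq0 => /eqP.
Qed.

Lemma gram_conj_eq0 p q (X : 'M[C]_(p, q)) (K : 'M[C]_q) :
  adjmx X *m X *m K *m (adjmx X *m X) = 0 -> X *m K *m adjmx X = 0.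
Proof.
move=> XXKXX0; apply: mxtrace_gram_eq0.
rewrite !adjmxM adjmxK -!mulmxA mxtrace_mulC !mulmxA.
by rewrite -!mulmxA in XXKXX0 *; rewrite XXKXX0 mulmx0 mxtrace0.
Qed.
End Adjoint.

Section PositiveSemidefinite.
Variables (C : numClosedFieldType) (n : nat).
Implicit Types (Y H : 'M[C]_n) (u v w : 'cV[C]_n).

Definition qform Y u v : C := (adjmx u *m Y *m v) 0 0.

Lemma qformDl (a b : C) Y H u v :
  qform (a *: Y + b *: H) u v = a * qform Y u v + b * qform H u v.
Proof. by rewrite /qform mulmxDr mulmxDl -!scalemxAr -!scalemxAl !mxE. Qed.

Lemma qform_adj_conj p (A : 'M[C]_p) (X : 'M[C]_(p, n)) u v :
  qform (adjmx X *m A *m X) u v = (adjmx (X *m u) *m A *m (X *m v)) 0 0.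
Proof. by rewrite /qform adjmxM !mulmxA. Qed.

Lemma conjC_qform Y u v : (qform Y u v)^* = qform (adjmx Y) v u.
Proof.
rewrite /qform; transitivity (adjmx (adjmx u *m Y *m v) 0 0); first by rewrite /adjmx mxE.
by rewrite !adjmxM adjmxK mulmxA.
Qed.

Lemma qform_expand Y v w (l : C) : qform Y (v + l *: w) (v + l *: w) =
  qform Y v v + l * qform Y v w + l^* * qform Y w v + l^* * l * qform Y w w.
Proof.
rewrite /qform adjmxD adjmxZ !mulmxDl !mulmxDr -!scalemxAl -!scalemxAr scalerA !mxE.
by ring.
Qed.

Lemma quadratic_ge0_linear_eq0 (g b : C) : 0 <= b ->
  (forall r : C, r \is Num.real -> 0 <= r * g + r ^+ 2 * b) -> g = 0.
Proof.
move=> b_ge0 q_ge0.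
have g_real : g \is Num.real.
  have /ger0_real := q_ge0 1 (rpred1 _); rewrite mul1r expr1n mul1r => gb_real.
  by have := rpredB gb_real (ger0_real b_ge0); rewrite addrK.
have b1_gt0 : 0 < b + 1 by rewrite ltr_wpDl ?ltr01.
have b1_neq0 : b + 1 != 0 by rewrite gt_eqF.
pose x := g / (b + 1).
have x_real : x \is Num.real by rewrite rpredM // rpredV ger0_real // ltW.
have := q_ge0 (- x); rewrite realN => /(_ x_real).
have -> : - x * g + (- x) ^+ 2 * b = - x ^+ 2 by rewrite /x; field.
rewrite oppr_ge0 => x2_le0.
have : x ^+ 2 == 0 by rewrite eq_le x2_le0 -real_normK // exprn_ge0.
by rewrite sqrf_eq0 mulf_eq0 invr_eq0 (negbTE b1_neq0) orbF => /eqP.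
Qed.

Lemma psdmx_qform0 Y v : psdmx Y -> qform Y v v = 0 ->
  Y *m v = 0 /\ adjmx v *m Y = 0.
Proof.
move=> psdY Yv0.
have vw0 w : qform Y v w = 0 /\ qform Y w v = 0.
  have Yw_ge0 : 0 <= qform Y w w by apply: psdY.
  have sum0 : qform Y v w + qform Y w v = 0.
    apply: (quadratic_ge0_linear_eq0 Yw_ge0) => r r_real.
    have := psdY (v + r *: w); rewrite -/(qform _ _ _) qform_expand Yv0 conj_Creal //.
    by congr (0 <= _); ring.
  have idiff0 : 'i * (qform Y v w - qform Y w v) = 0.
    apply: (quadratic_ge0_linear_eq0 Yw_ge0) => r r_real.
    have := psdY (v + ('i * r) *: w).
    rewrite -/(qform _ _ _) qform_expand Yv0 rmorphM /= conjCi conj_Creal //.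
    have i2 : 'i ^+ 2 = -1 :> C := sqrCi C.
    by congr (0 <= _); ring: i2.
  move/eqP: idiff0; rewrite mulf_eq0 (negbTE (neq0Ci C)) subr_eq0 => /eqP eq_vw.
  move: sum0; rewrite eq_vw -mulr2n => /eqP.
  by rewrite mulrn_eq0 /= => /eqP ->.
split; apply/matrixP=> i j.
  rewrite (ord1 j) [RHS]mxE; have := (vw0 (delta_mx i 0)).2.
  by rewrite /qform adjmx_delta -mulmxA -rowE mxE.
rewrite (ord1 i) [RHS]mxE; have := (vw0 (delta_mx j 0)).1.
by rewrite /qform -colE mxE.
Qed.

Lemma psdmx_convex_qform0 Y H (a b : C) v : psdmx Y -> psdmx H -> 0 < a -> 0 < b ->
  qform (a *: Y + b *: H) v v = 0 -> qform Y v v = 0 /\ qform H v v = 0.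
Proof.
move=> psdY psdH a_gt0 b_gt0; rewrite qformDl => /eqP.
have Yv_ge0 : 0 <= qform Y v v by apply: psdY.
have Hv_ge0 : 0 <= qform H v v by apply: psdH.
rewrite paddr_eq0 ?mulr_ge0 ?(ltW a_gt0) ?(ltW b_gt0) // !mulf_eq0 (gt_eqF a_gt0) (gt_eqF b_gt0) /=.
by case/andP=> /eqP -> /eqP ->.
Qed.

Lemma psdmx_adj_conj p (A : 'M[C]_p) (X : 'M[C]_(p, n)) :
  psdmx A -> psdmx (adjmx X *m A *m X).
Proof. by move=> psdA v; rewrite -/(qform _ v v) qform_adj_conj; apply: psdA. Qed.

Lemma qform1 w : qform 1%:M w w = \sum_i `|w i 0| ^+ 2.
Proof.
rewrite /qform mulmx1 mxE; apply: eq_bigr => i _.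
by rewrite /adjmx mxE normCK mulrC.
Qed.

Lemma normr_qform_le Y w :
  `|qform Y w w| <= (\sum_i \sum_j `|Y i j|) * qform 1%:M w w.
Proof.
rewrite qform1; set s := \sum_i `|w i 0| ^+ 2.
have w_le i : `|w i 0| ^+ 2 <= s.
  by rewrite /s (bigD1 i) //= lerDl sumr_ge0 // => j _; rewrite exprn_ge0.
have ww_le i j : `|w i 0| * `|w j 0| <= s.
  case/orP: (real_leVge (normr_real (w i 0)) (normr_real (w j 0))) => [le_ij|le_ji].
    by apply: le_trans (w_le j); rewrite expr2 ler_wpM2r.
  by apply: le_trans (w_le i); rewrite expr2 ler_wpM2l.
have -> : qform Y w w = \sum_i \sum_j (w i 0)^* * Y i j * w j 0.
  rewrite /qform mxE exchange_big; apply: eq_bigr => j _; rewrite mxE mulr_suml.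
  by apply: eq_bigr => i _; rewrite /adjmx !mxE.
rewrite mulr_suml; apply: le_trans (ler_norm_sum _ _ _) _; apply: ler_sum => i _.
rewrite mulr_suml; apply: le_trans (ler_norm_sum _ _ _) _; apply: ler_sum => j _.
rewrite !normrM norm_conjC mulrAC mulrC; apply: ler_wpM2l; first exact: normr_ge0.
by rewrite mulrC.
Qed.

Lemma psdmx_1_perturb H (e : C) : adjmx H = H -> e \is Num.real ->
  `|e| * (\sum_i \sum_j `|H i j|) <= 1 -> psdmx (1%:M + e *: H).
Proof.
move=> herH e_real e_small v; rewrite -/(qform _ v v).
rewrite -[1%:M]scale1r qformDl mul1r.
have H_real : qform H v v \is Num.real.
  by rewrite CrealE conjC_qform herH.
have v_ge0 : 0 <= qform 1%:M v v.
  by rewrite qform1 sumr_ge0 // => i _; rewrite exprn_ge0.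
have eH_le : `|e * qform H v v| <= qform 1%:M v v.
  rewrite normrM; apply: le_trans (ler_wpM2l (normr_ge0 e) (normr_qform_le H v)) _.
  by rewrite mulrA -[leRHS]mul1r ler_wpM2r.
by rewrite -(lerD2l (- qform 1%:M v v)) addr0 addKr real_lerNnormlW // realM.
Qed.
End PositiveSemidefinite.

Section RowSpaces.
Variable F : fieldType.

Lemma submx_kerP p q r (A : 'M[F]_(p, r)) (B : 'M[F]_(q, r)) :
  reflect (forall u : 'cV_r, B *m u = 0 -> A *m u = 0) (A <= B)%MS.
Proof.
apply: (iffP idP) => [/submxP [D ->] u Bu0 | kerBA]; first by rewrite -mulmxA Bu0 mulmx0.
rewrite submxE; apply/eqP/matrixP => i j.
have := kerBA (cokermx B *m delta_mx j 0); rewrite mulmxA mulmx_coker mul0mx.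
by move=> /(_ erefl)/matrixP/(_ i 0); rewrite mulmxA -colE !mxE.
Qed.

Lemma submx_factor p q r s (A : 'M[F]_(p, q)) (P : 'M[F]_(p, r)) (Q : 'M[F]_(s, q)) :
  (A <= Q)%MS -> (A^T <= P^T)%MS -> exists K, A = P *m K *m Q.
Proof.
move=> sAQ /submxP [E /(congr1 trmx)]; rewrite trmxK trmx_mul trmxK => defA.
by exists (E^T *m pinvmx Q); rewrite (mulmxA P) -defA mulmxKpV.
Qed.

Lemma mxvec_pairing p q (A B : 'M[F]_(p, q)) :
  (mxvec A *m (mxvec B)^T) 0 0 = \tr (A *m B^T).
Proof.
rewrite mxE (reindex _ (curry_mxvec_bij _ _)) /=.
transitivity (\sum_(t : 'I_p * 'I_q) A t.1 t.2 * B t.1 t.2).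
  by apply: eq_bigr => -[i j] _; rewrite !mxE !mxvecE.
rewrite -(pair_bigA _ (fun i j => A i j * B i j)) /=; apply: eq_bigr => i _; rewrite mxE.
by apply: eq_bigr => j _; rewrite mxE.
Qed.

Lemma linear_image_separation p q p' q' r s
    (f : {linear 'M[F]_(p, q) -> 'M[F]_(r, s)}) (g : {linear 'M[F]_(p', q') -> 'M[F]_(r, s)}) :
  ~ (forall P, exists N, f P = g N) ->
  exists K : 'M[F]_(s, r), (forall N, \tr (g N *m K) = 0) /\ exists P, \tr (f P *m K) != 0.
Proof.
move=> not_fg.
have : ~ forall u : 'cV_(r * s), lin_mx g *m u = 0 -> lin_mx f *m u = 0.
  move=> kergf; have sfg : (lin_mx f <= lin_mx g)%MS by apply/submx_kerP.
  apply: not_fg => P.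
  have /submxP [x] : (mxvec (f P) <= lin_mx g)%MS.
    by rewrite -mul_vec_lin (submx_trans (submxMl _ _) sfg).
  by rewrite mul_rV_lin => /(can_inj mxvecK) ->; exists (vec_mx x).
move=> /not_all_ex_not [u /(imply_to_and (lin_mx g *m u = 0)) [gu0 fu_neq0]].
pose K := (vec_mx u^T)^T.
have pairK P : (mxvec P *m u) 0 0 = \tr (P *m K).
  by rewrite /K -mxvec_pairing vec_mxK trmxK.
exists K; split=> [N | ].
  by rewrite -pairK -mul_vec_lin -mulmxA gu0 mulmx0 mxE.
have /matrix0Pn [i [j]] : lin_mx f *m u != 0 by apply/eqP.
rewrite (ord1 j) => fu_i; exists (vec_mx (delta_mx 0 i)).
by rewrite -pairK -mul_vec_lin vec_mxK -mulmxA -rowE mxE.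
Qed.
End RowSpaces.

Section BlockOperators.
Variables (C : numClosedFieldType) (S : finType) (d m : S -> nat).
Local Notation I := (idxT d m).
Local Notation T k := ('I_(d k) * 'I_(m k))%type.
Local Notation n := #|I|.

Definition block_rank k (t : T k) : 'I_n := enum_rank (Tagged (fun k => T k) t : I).

Lemma sum_pair (U V : finType) (F : U * V -> C) : \sum_t F t = \sum_i \sum_j F (i, j).
Proof. by rewrite pair_bigA; apply: eq_bigr => -[]. Qed.

Lemma sum_block_rank (F : 'I_n -> C) : \sum_i F i = \sum_k \sum_(t : T k) F (block_rank t).
Proof.
rewrite (reindex (@enum_rank I)) /=; last first.
  by exists enum_val => x _; rewrite ?enum_valK ?enum_rankK.
rewrite (sig_big_dep xpredT (fun k (t : T k) => true) (fun k (t : T k) => F (block_rank t))).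
by apply: eq_bigr => -[k t].
Qed.

Lemma blockopE (M : forall k, 'M[C]_(m k)) k (t t' : T k) :
  blockop d M (block_rank t) (block_rank t') = (t.1 == t'.1)%:R * M k t.2 t'.2.
Proof.
rewrite mxE /block_rank !enum_rankK /= eqxx /tagged_as /=.
by case: eqP => // e; rewrite [e]eq_axiomK.
Qed.

Lemma blockopE_neq (M : forall k, 'M[C]_(m k)) k k' (t : T k) (t' : T k') :
  k != k' -> blockop d M (block_rank t) (block_rank t') = 0.
Proof. by move=> /negbTE neq_kk'; rewrite mxE /block_rank !enum_rankK /= neq_kk'. Qed.

Lemma blockop_linear a (M M' : forall k, 'M[C]_(m k)) :
  blockop d (fun k => a *: M k + M' k) = a *: blockop d M + blockop d M'.
Proof.
apply/matrixP=> i j; rewrite !mxE /=; case: ifP => _; last by rewrite mulr0 addr0.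
by rewrite !mxE mulrDr mulrCA.
Qed.

Lemma blockop0 : blockop d (fun k => 0 : 'M[C]_(m k)) = 0.
Proof. by apply/matrixP=> i j; rewrite !mxE /=; case: ifP => _ //; rewrite mxE mulr0. Qed.

Lemma ptrace_is_linear k : linear (@ptrace S d m C k).
Proof.
move=> a A B; apply/matrixP=> x y; rewrite !mxE mulr_sumr -big_split /=.
by apply: eq_bigr => al _; rewrite !mxE.
Qed.

HB.instance Definition _ k :=
  GRing.isLinear.Build C 'M[C]_n 'M[C]_(m k) _ (@ptrace S d m C k) (ptrace_is_linear k).

Lemma ptrace_adj k (A : 'M[C]_n) : ptrace k (adjmx A) = adjmx (ptrace k A).
Proof.
by apply/matrixP=> a b; rewrite /adjmx !mxE rmorph_sum; apply: eq_bigr => al _; rewrite mxE.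
Qed.

Lemma mxtrace_mul_blockop (A : 'M[C]_n) (M : forall k, 'M[C]_(m k)) :
  \tr (A *m blockop d M) = \sum_k \tr (ptrace k A *m M k).
Proof.
rewrite /mxtrace sum_block_rank; apply: eq_bigr => k _.
transitivity (\sum_(t : T k) \sum_(t' : T k) A (block_rank t) (block_rank t') *
                 blockop d M (block_rank t') (block_rank t)).
  apply: eq_bigr => t _; rewrite mxE sum_block_rank (bigD1 k) //=.
  rewrite [X in _ + X]big1 ?addr0 // => k' neq_k'k.
  by apply: big1 => t' _; rewrite blockopE_neq ?mulr0.
under eq_bigr do under eq_bigr do rewrite blockopE.
transitivity (\sum_(t : T k) \sum_(b < m k) A (block_rank t) (block_rank (t.1, b)) * M k b t.2).
  apply: eq_bigr => -[al a] _; rewrite sum_pair (bigD1 al) //= [X in _ + X]big1 => [|be neq_be].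
    by rewrite addr0; apply: eq_bigr => b _; rewrite eqxx mul1r.
  by apply: big1 => b _; rewrite (negbTE neq_be) mul0r mulr0.
rewrite sum_pair exchange_big; apply: eq_bigr => a _; rewrite mxE.
rewrite exchange_big; apply: eq_bigr => b _; rewrite mxE mulr_suml.
by apply: eq_bigr => al _.
Qed.

Lemma ptrace_eq0P (A : 'M[C]_n) :
  (forall k, ptrace k A = 0) <-> forall M : forall k, 'M[C]_(m k), \tr (A *m blockop d M) = 0.
Proof.
split=> [A0 M | A_perp k].
  by rewrite mxtrace_mul_blockop big1 // => k _; rewrite A0 mul0mx mxtrace0.
apply/matrixP=> a b; rewrite [RHS]mxE.
(* test against the matrix unit E_ba placed in block k *)
pose M k' : 'M[C]_(m k') := \matrix_(i, j) ((k' == k) && (val i == val b) && (val j == val a))%:R.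
rewrite -(A_perp M) mxtrace_mul_blockop (bigD1 k) //= [X in _ + X]big1 => [|k' neq_k'k].
  rewrite addr0 /mxtrace (bigD1 a) //= [X in _ + X]big1 => [|i neq_ia].
    rewrite addr0 [RHS]mxE (bigD1 b) //= [X in _ + X]big1 => [|j neq_jb].
      by rewrite addr0 /M [X in _ = _ * X]mxE !eqxx mulr1.
    by rewrite /M !mxE eqxx !(inj_eq val_inj) (negbTE neq_jb) mulr0.
  rewrite mxE big1 // => j _.
  by rewrite /M !mxE eqxx !(inj_eq val_inj) (negbTE neq_ia) andbF mulr0.
rewrite /mxtrace big1 // => i _; rewrite mxE big1 // => j _.
by rewrite /M !mxE (negbTE neq_k'k) mulr0.
Qed.

Lemma span_blockop_conj (X : 'M[C]_n) (A : 'M[C]_n) :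
  in_span (fun B => exists M, B = X *m blockop d M *m adjmx X) A ->
  exists M, A = X *m blockop d M *m adjmx X.
Proof.
case=> l [c [B [B_form ->]]]; elim: l c B B_form => [|l IHl] c B B_form.
  by exists (fun k => 0); rewrite big_ord0 blockop0 mulmx0 mul0mx.
rewrite big_ord_recl; have [M0 ->] := B_form ord0.
have [M' ->] := IHl (fun j => c (lift ord0 j)) (fun j => B (lift ord0 j)) (fun j => B_form _).
exists (fun k => c ord0 *: M0 k + M' k).
by rewrite blockop_linear mulmxDr mulmxDl -scalemxAr -scalemxAl.
Qed.

Section BlockProjection.
Hypothesis d_gt0 : forall k, (0 < d k)%N.

(* A linear retraction of 'M_n onto the block operators (it keeps the blocks
   at alpha = 0), so that they form the image of a linear map. *)
Definition to_blockop (N : 'M[C]_n) : 'M[C]_n :=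
  blockop d (fun k => \matrix_(a, b) N (block_rank (Ordinal (d_gt0 k), a))
                                       (block_rank (Ordinal (d_gt0 k), b))).

Lemma to_blockop_is_blockop N : exists M, to_blockop N = blockop d M.
Proof. by eexists. Qed.

Lemma to_blockop_id M : to_blockop (blockop d M) = blockop d M.
Proof.
congr blockop; apply: functional_extensionality_dep => k.
by apply/matrixP => a b; rewrite mxE blockopE eqxx mul1r.
Qed.

Lemma to_blockop_is_linear : linear to_blockop.
Proof.
move=> a N N'; rewrite /to_blockop -blockop_linear; congr blockop.
by apply: functional_extensionality_dep => k; apply/matrixP => x y; rewrite !mxE.
Qed.

HB.instance Definition _ :=
  GRing.isLinear.Build C 'M[C]_n 'M[C]_n _ to_blockop to_blockop_is_linear.
End BlockProjection.
End BlockOperators.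

Section Range.
Variables (C : numClosedFieldType) (n : nat).
Implicit Types X A D K : 'M[C]_n.

Lemma BRng_conjP X A : BRng X A <-> exists K, A = X *m K *m adjmx X.
Proof.
rewrite /BRng /rng_sub -{2}[X]adjmxK submx_adjmx_tr; split=> [[sAX sAXa] | [K ->]].
  by have [K ->] := submx_factor sAXa sAX; exists K.
by split; [rewrite !trmx_mul mulmxA; apply: submxMl | apply: submxMl].
Qed.

Lemma kernel_conj_form X D :
    (forall v : 'cV_n, X *m v = 0 -> D *m v = 0 /\ adjmx v *m D = 0) ->
  exists K, D = adjmx X *m K *m X.
Proof.
move=> kerXD; have sDX : (D <= X)%MS by apply/submx_kerP => v /kerXD [].
have sDaX : (adjmx D <= X)%MS.
  by apply/submx_kerP => v /kerXD [_ vD0]; rewrite -[v]adjmxK -adjmxM vD0 adjmx0.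
by apply: submx_factor sDX _; rewrite -{1}[D]adjmxK submx_adjmx_tr.
Qed.

Lemma sandwich_orthogonal_eq0 X D K B :
    D = adjmx X *m K *m X -> X *m D *m adjmx X = X *m B *m adjmx X ->
  \tr (adjmx D *m B) = 0 -> D = 0.
Proof.
move=> defD XDX DB0; apply: mxtrace_gram_eq0.
have -> : \tr (adjmx D *m D) = \tr (adjmx (X *m D *m adjmx X) *m K).
  by rewrite {2}defD !adjmxM adjmxK !mulmxA mxtrace_mulC !mulmxA.
rewrite XDX !adjmxM adjmxK -!mulmxA mxtrace_mulC !mulmxA.
have -> : adjmx B *m adjmx X *m K *m X = adjmx (adjmx D *m B).
  by rewrite adjmxM adjmxK defD !mulmxA.
by rewrite mxtrace_adjmx DB0 conjC0.
Qed.

Lemma hermitian_parts_eq0 D : D + adjmx D = 0 -> 'i *: D + adjmx ('i *: D) = 0 -> D = 0.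
Proof.
move=> re0; rewrite adjmxZ conjCi scaleNr -scalerBr => /eqP.
rewrite scaler_eq0 (negbTE (neq0Ci C)) subr_eq0 /= => /eqP adjD.
by move/eqP: re0; rewrite -adjD -mulr2n -scaler_nat scaler_eq0 pnatr_eq0 => /eqP.
Qed.
End Range.

Section Convexity.
Variable R : realType.
Local Notation C := R[i].

Lemma in_span_of p (P : 'M[C]_p -> Prop) A : P A -> in_span P A.
Proof. by move=> PA; exists 1%N, (fun _ => 1), (fun _ => A); rewrite big_ord1 scale1r. Qed.

Lemma extreme_point_midpoint p (P : 'M[C]_p -> Prop) x D :
  extreme_point P x -> P (x + D) -> P (x - D) -> D = 0.
Proof.
case=> _ x_ext PxD PxD'.
have half01 : 0 < (2^-1 : R) < 1.
  have half_gt0 : (0 : R) < 2^-1 by lra.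
  have half_lt1 : (2^-1 : R) < 1 by lra.
  by rewrite half_gt0 half_lt1.
have half2 : ((2^-1 : R)%:C + (2^-1 : R)%:C)%C = 1 :> C.
  by rewrite -raddfD /= (_ : 2^-1 + 2^-1 = 1 :> R) //; field.
have := x_ext _ _ _ PxD PxD' half01.
rewrite (_ : 1 - 2^-1 = 2^-1 :> R); last by field.
rewrite -scalerDr addrACA subrr addr0 scalerDr -scalerDl half2 scale1r => /(_ erefl)/addrI/eqP.
by rewrite -subr_eq0 opprK -mulr2n -scaler_nat scaler_eq0 pnatr_eq0 => /eqP.
Qed.
End Convexity.

Section Seeds.
Variables (R : realType) (S : finType) (d m : S -> nat).
Local Notation C := R[i].
Local Notation n := #|idxT d m|.
Implicit Types Xi X H D : 'M[C]_n.

Lemma seedC_add Xi D : seedC Xi -> (forall k, ptrace k D = 0) -> psdmx (Xi + D) ->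
  seedC (Xi + D).
Proof. by move=> [_ trXi] trD0 psdXiD; split=> // k; rewrite linearD /= trD0 addr0 trXi. Qed.

(* A hermitian direction inside the support of an extremal seed with vanishing
   partial traces moves it both ways inside C, so it must vanish. *)
Lemma extreme_seed_rigid Xi X H :
    seedC Xi -> Xi = adjmx X *m X -> extreme_point (@seedC R S d m) Xi ->
    adjmx H = H -> (forall k, ptrace k (adjmx X *m H *m X) = 0) ->
  adjmx X *m H *m X = 0.
Proof.
move=> seedXi defXi extXi herH trD0; set D := adjmx X *m H *m X.
set K := \sum_i \sum_j `|H i j|.
have K_ge0 : 0 <= K by rewrite sumr_ge0 // => i _; rewrite sumr_ge0.
have K1_gt0 : 0 < K + 1 by rewrite ltr_wpDl ?ltr01.
set e := (K + 1)^-1.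
have e_gt0 : 0 < e by rewrite invr_gt0.
have seed_pm (s : C) : s \is Num.real -> `|s| = e -> seedC (Xi + s *: D).
  move=> s_real norm_s; apply: seedC_add => // [k | ]; first by rewrite linearZ /= trD0 scaler0.
  have -> : Xi + s *: D = adjmx X *m (1%:M + s *: H) *m X.
    by rewrite defXi mulmxDr mulmx1 mulmxDl -scalemxAr -scalemxAl.
  apply/psdmx_adj_conj/psdmx_1_perturb => //; rewrite norm_s /e.
  by rewrite ler_pdivrMl // mulr1 lerDl ler01.
have e_real := gtr0_real e_gt0; have norm_e := gtr0_norm e_gt0.
have seed_m : seedC (Xi - e *: D) by rewrite -scaleNr; apply: seed_pm; rewrite ?realN ?normrN.
have /eqP := extreme_point_midpoint extXi (seed_pm e e_real norm_e) seed_m.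
by rewrite scaler_eq0 (gt_eqF e_gt0) => /eqP.
Qed.

Lemma not_blockop_conj_traceless (d_gt0 : forall k, (0 < d k)%N) X K0 :
    ~ (exists M, X *m K0 *m adjmx X = X *m blockop d M *m adjmx X) ->
  exists K, (forall k, ptrace k (adjmx X *m X *m K *m (adjmx X *m X)) = 0) /\
            adjmx X *m X *m K *m (adjmx X *m X) != 0.
Proof.
move=> no_M; set G := adjmx X *m X.
have [K [gK0 [P fK]]] : exists K, (forall N, \tr (G *m to_blockop d_gt0 N *m G *m K) = 0) /\
                                  exists P, \tr (G *m P *m G *m K) != 0.
  apply: (linear_image_separation (f := mulmxr G \o mulmx G)
                                  (g := mulmxr G \o mulmx G \o to_blockop d_gt0)) => fg.
  have [N /= GK0G] := fg K0.
  have XK0X : X *m K0 *m adjmx X = X *m to_blockop d_gt0 N *m adjmx X.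
    apply/eqP; rewrite -subr_eq0 -mulmxBl -mulmxBr; apply/eqP/gram_conj_eq0.
    by rewrite mulmxBr mulmxBl GK0G subrr.
  have [M defN] := to_blockop_is_blockop d_gt0 N.
  by apply: no_M; exists M; rewrite XK0X defN.
clearbody G; exists K; split.
  apply/ptrace_eq0P => M; rewrite -(gK0 (blockop d M)) to_blockop_id.
  transitivity (\tr (K *m (G *m blockop d M *m G))); last by rewrite mxtrace_mulC.
  by rewrite -!mulmxA mxtrace_mulC !mulmxA.
apply: contraNneq fK => GKG0.
have -> : \tr (G *m P *m G *m K) = \tr (P *m (G *m K *m G)).
  by rewrite -!mulmxA mxtrace_mulC !mulmxA.
by rewrite GKG0 mulmx0 mxtrace0.
Qed.

Lemma extreme_seed_span (d_gt0 : forall k, (0 < d k)%N) Xi X A :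
    seedC Xi -> Xi = adjmx X *m X -> extreme_point (@seedC R S d m) Xi ->
  BRng X A -> exists M, A = X *m blockop d M *m adjmx X.
Proof.
move=> seedXi defXi extXi /BRng_conjP [K0 ->]; apply: NNPP => no_M.
have [K [trD0 D0_neq0]] := not_blockop_conj_traceless d_gt0 no_M.
set G := adjmx X *m X in trD0 D0_neq0; set D0 := G *m K *m G in trD0 D0_neq0.
have defG : G = adjmx X *m X by [].
have adjG : adjmx G = G by rewrite defG adjmxM adjmxK.
clearbody G.
have herm_part0 c : c *: D0 + adjmx (c *: D0) = 0.
  pose Kc := c *: K + adjmx (c *: K).
  have defDc : c *: D0 + adjmx (c *: D0) = adjmx X *m (X *m Kc *m adjmx X) *m X.
    have -> : adjmx X *m (X *m Kc *m adjmx X) *m X = G *m Kc *m G by rewrite defG !mulmxA.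
    rewrite /Kc /D0 mulmxDr mulmxDl -!scalemxAr -!scalemxAl !adjmxZ !adjmxM adjG.
    by rewrite -scalemxAr -scalemxAl mulmxA.
  rewrite defDc; apply: extreme_seed_rigid seedXi defXi extXi _ _ => [|k].
    by rewrite !adjmxM adjmxK /Kc adjmxD adjmxK addrC !mulmxA.
  by rewrite -defDc linearD /= ptrace_adj linearZ /= trD0 scaler0 adjmx0 addr0.
have D0_eq0 : D0 = 0.
  apply: hermitian_parts_eq0; last exact: herm_part0.
  by have := herm_part0 1; rewrite scale1r.
by rewrite D0_eq0 eqxx in D0_neq0.
Qed.

Lemma span_seed_extreme Xi X :
    seedC Xi -> Xi = adjmx X *m X ->
    (forall A, BRng X A -> exists M, A = X *m blockop d M *m adjmx X) ->
  extreme_point (@seedC R S d m) Xi.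
Proof.
move=> seedXi defXi spanX; split=> // y z t [psdy try] [psdz trz] /andP [t_gt0 t_lt1] defXi'.
have a_gt0 : 0 < (t%:C)%C :> C by rewrite -[0]/((0 : R)%:C)%C ltcR.
have b_gt0 : 0 < ((1 - t)%:C)%C :> C by rewrite -[0]/((0 : R)%:C)%C ltcR subr_gt0.
have ker v : X *m v = 0 -> qform y v v = 0 /\ qform z v v = 0.
  move=> Xv0; apply: psdmx_convex_qform0 psdy psdz a_gt0 b_gt0 _.
  by rewrite -defXi' defXi /qform !mulmxA -(mulmxA _ X) Xv0 mulmx0 mxE.
set D := y - z.
have [K defD] : exists K, D = adjmx X *m K *m X.
  apply: kernel_conj_form => v /ker [/(psdmx_qform0 psdy) [yv vy] /(psdmx_qform0 psdz) [zv vz]].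
  by rewrite /D mulmxBl mulmxBr yv zv vy vz !subrr.
have [M XDX] : exists M, X *m D *m adjmx X = X *m blockop d M *m adjmx X.
  by apply: spanX; apply/BRng_conjP; exists D.
apply/eqP; rewrite -subr_eq0; apply/eqP; apply: sandwich_orthogonal_eq0 defD XDX _.
apply: (ptrace_eq0P _).1 => k.
by rewrite ptrace_adj linearB /= try trz subrr adjmx0.
Qed.
End Seeds.

Unset Implicit Arguments.

Theorem theorem2 (R : realType) (S : finType) (d m : S -> nat)
    (hd : forall k, (0 < d k)%N) (hm : forall k, (0 < m k)%N)
    (Xi X : 'M[R[i]]_#|idxT d m|) :
  seedC Xi -> Xi = adjmx X *m X ->
  (extreme_point (@seedC R S d m) Xi <->
   forall A : 'M[R[i]]_#|idxT d m|,
     BRng X A <->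
     in_span (fun B => exists M : forall k : S, 'M[R[i]]_(m k),
                 B = X *m @blockop S d m _ M *m adjmx X) A).
Proof.
move=> seedXi defXi; split=> [extXi A | spanX].
  split=> [/(extreme_seed_span hd seedXi defXi extXi) [M ->] | /span_blockop_conj [M ->]].
    by apply: in_span_of; exists M.
  by apply/BRng_conjP; exists (blockop d M).
by apply: span_seed_extreme seedXi defXi _ => A /spanX /span_blockop_conj.
Qed.
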